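(* Let $S\in\mathcal{B}_A(\mathcal{H})$. Then $$\omega_A^4(S)\le\frac14\Big\|\big(S^{\sharp_A}S\big)^2+\big(SS^{\sharp_A}\big)^2\Big\|_A+\frac12\,\omega_A\big(S^{\sharp_A}S^2S^{\sharp_A}\big).$$
   Context: $\mathcal{H}$ is a complex Hilbert space with inner product $\langle\cdot,\cdot\rangle$, and $A$ is a fixed nonzero positive bounded operator on $\mathcal{H}$. Set $\langle x,y\rangle_A=\langle Ax,y\rangle$ and $\|x\|_A=\|A^{1/2}x\|$. $\mathcal{B}_A(\mathcal{H})$ is the set of bounded operators $T$ for which there exists a bounded $S$ with $\langle Tx,y\rangle_A=\langle x,Sy\rangle_A$ for all $x,y$ (equivalently $\mathcal{R}(T^*A)\subseteq\mathcal{R}(A)$). For $T\in\mathcal{B}_A(\mathcal{H})$, $T^{\sharp_A}=A^\dagger T^*A$ ($A^\dagger$ the Moore–Penrose inverse) is the reduced solution of $AX=T^*A$. For an operator $T$ with $\|Tx\|_A\le\lambda\|x\|_A$ for some $\lambda>0$ and all $x$, $\|T\|_A=\sup\{\|Tx\|_A: \|x\|_A=1\}$, and $\omega_A(T)=\sup\{|\langle Tx,x\rangle_A|:\|x\|_A=1\}$. *)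

From HB Require Import structures.
From mathcomp Require Import all_boot all_order all_algebra.
From mathcomp Require Import complex.
From mathcomp Require Import boolp classical_sets reals.
From Stdlib Require Import ClassicalEpsilon.
Set Implicit Arguments. Unset Strict Implicit. Unset Printing Implicit Defensive.
Import Order.TTheory GRing.Theory Num.Theory.
Local Open Scope ring_scope.
Local Open Scope classical_set_scope.

Section HilbertDefs.
Variables (R : realType) (H : lmodType R[i]) (ip : H -> H -> R[i]).

Definition hnorm (x : H) : R := Num.sqrt (complex.Re (ip x x)).

Definition is_hilbert_space : Prop :=
  [/\ (forall (a : R[i]) (x y z : H), ip (a *: x + y) z = a * ip x z + ip y z),
      (forall x y : H, ip y x = conjc (ip x y)),
      (forall x : H, 0 <= ip x x),
      (forall x : H, ip x x = 0 -> x = 0) &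
      (forall u : nat -> H,
         (forall e : R, 0 < e -> exists N, forall m n, (N <= m)%N -> (N <= n)%N ->
             hnorm (u m - u n) < e) ->
         exists l : H, forall e : R, 0 < e -> exists N, forall n, (N <= n)%N ->
             hnorm (u n - l) < e)].

Definition bounded_op (T : H -> H) : Prop :=
  (forall (a : R[i]) (x y : H), T (a *: x + y) = a *: T x + T y) /\
  exists M : R, forall x, hnorm (T x) <= M * hnorm x.

(* the Hilbert adjoint T^* (chosen by classical choice; for bounded T on a
   Hilbert space it exists and is unique) *)
Definition adjoint (T : H -> H) : H -> H :=
  epsilon (inhabits (fun x : H => x))
    (fun S : H -> H => forall x y, ip (T x) y = ip x (S y)).

Definition positive_op (A : H -> H) : Prop :=
  bounded_op A /\ forall x, 0 <= ip (A x) x.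

(* Moore-Penrose inverse A^dagger of A, on its domain R(A) + R(A)^perp:
   A^dagger y is the unique z in N(A)^perp with A z - y in R(A)^perp. *)
Definition mp_inverse (A : H -> H) (y : H) : H :=
  epsilon (inhabits (0 : H))
    (fun z : H => (forall w, A w = 0 -> ip z w = 0) /\
                  (forall w, ip (A z - y) (A w) = 0)).

Definition ipA (A : H -> H) (x y : H) : R[i] := ip (A x) y.
Definition normA (A : H -> H) (x : H) : R := Num.sqrt (complex.Re (ipA A x x)).

Definition in_BA (A T : H -> H) : Prop :=
  bounded_op T /\ exists S : H -> H, bounded_op S /\
    forall x y, ipA A (T x) y = ipA A x (S y).

Definition sharpA (A T : H -> H) : H -> H :=
  fun x => mp_inverse A (adjoint T (A x)).

Definition opnormA (A T : H -> H) : R :=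
  sup [set r : R | exists x, normA A x = 1 /\ r = normA A (T x)].

Definition numradA (A T : H -> H) : R :=
  sup [set r : R | exists x, normA A x = 1 /\ r = ComplexField.Normc.normc (ipA A (T x) x)].

End HilbertDefs.

From HB Require Import structures.
From mathcomp Require Import all_boot all_order all_algebra.
From mathcomp Require Import complex.
From mathcomp Require Import boolp classical_sets reals.
From mathcomp Require Import ring lra.
From Stdlib Require Import ClassicalEpsilon.
Set Implicit Arguments. Unset Strict Implicit. Unset Printing Implicit Defensive.
Import Order.TTheory GRing.Theory Num.Theory.
Local Open Scope ring_scope.
Local Open Scope complex_scope.
Local Open Scope classical_set_scope.

(* For [x] with [||x||_A = 1] put [a = S S^# x] and [b = S^# S x].  As [S^#] is an
   A-adjoint of [S], [|<Sx, x>_A|^2] is at most both [||Sx||_A^2 = <x, b>_A] and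
   [||S^# x||_A^2 = <a, x>_A], so [|<Sx, x>_A|^4 <= |<a, x>_A <x, b>_A|].  Buzano's
   inequality bounds this by [(||a||_A ||b||_A + |<a, b>_A|) / 2], where
   [2 ||a||_A ||b||_A <= ||a||_A^2 + ||b||_A^2 = Re <((S^# S)^2 + (S S^#)^2) x, x>_A]
   and [<a, b>_A = <S^# S^2 S^# x, x>_A]; taking suprema over [x] gives the claim.
   Behind this sit orthogonal projections onto closed subspaces (giving Riesz
   representation, the Hilbert adjoint and [A A^dagger A = A], which makes [S^#] an
   A-adjoint of [S]) and the A-boundedness of [S], obtained from the power trick
   [||T y||_A^(2^k) <= ||T^(2^k) y||_A ||y||_A^(2^k - 1)] for the A-selfadjoint
   operator [T = S' S], where [S'] is a bounded A-adjoint of [S]. *)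

Local Notation normc := ComplexField.Normc.normc.

Section ComplexFacts.
Variable R : realType.
Implicit Types z w : R[i].

Lemma conjcD z w : conjc (z + w) = conjc z + conjc w.
Proof. exact: rmorphD. Qed.

Lemma conjcN z : conjc (- z) = - conjc z.
Proof. exact: rmorphN. Qed.

Lemma conjcM z w : conjc (z * w) = conjc z * conjc w.
Proof. exact: rmorphM. Qed.

Lemma conjci : conjc 'i = - 'i :> R[i].
Proof. by apply/eqP; rewrite eq_complex /= oppr0 !eqxx. Qed.

Lemma ge0_RRe z : 0 <= z -> z = (complex.Re z)%:C.
Proof. by move=> z0; rewrite RRe_real ?ger0_real. Qed.

Lemma ge0_conjc z : 0 <= z -> conjc z = z.
Proof. by move/ge0_RRe ->; rewrite conjc_real. Qed.

Lemma normc_ge0 z : 0 <= normc z.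
Proof. by case: z => a b; exact: sqrtr_ge0. Qed.

Lemma normc_real (k : R) : 0 <= k -> normc k%:C = k.
Proof. by move=> k0; rewrite /= expr0n /= addr0 sqrtr_sqr ger0_norm. Qed.

Lemma Re_le_normc z : complex.Re z <= normc z.
Proof.
have := normc_ge_Re z; rewrite -[`|z|]/((normc z)%:C) lecR.
exact: le_trans (ler_norm _).
Qed.

Lemma ReD z w : complex.Re (z + w) = complex.Re z + complex.Re w.
Proof. by case: z; case: w. Qed.

Lemma ReN z : complex.Re (- z) = - complex.Re z.
Proof. by case: z. Qed.

Lemma ReJ z : complex.Re (conjc z) = complex.Re z.
Proof. by case: z. Qed.

Lemma ReM_real (k : R) z : complex.Re (k%:C * z) = k * complex.Re z.
Proof. by case: z => a b /=; ring. Qed.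

End ComplexFacts.

Lemma sqrtrD_le (R : rcfType) (a b : R) : 0 <= a -> 0 <= b ->
  Num.sqrt (a + b) <= Num.sqrt a + Num.sqrt b.
Proof.
move=> a0 b0; rewrite -(ler_pXn2r (isT : (0 < 2)%N)) ?nnegrE ?addr_ge0 ?sqrtr_ge0 //.
rewrite sqrrD !sqr_sqrtr ?addr_ge0 //.
have : 0 <= Num.sqrt a * Num.sqrt b *+ 2 by rewrite mulrn_wge0 // mulr_ge0 ?sqrtr_ge0.
lra.
Qed.

Lemma lt_inv_succ (R : archiRealFieldType) (e : R) : 0 < e ->
  exists N, forall k, (N <= k)%N -> k.+1%:R^-1 < e.
Proof.
move=> e0; have ei : 0 <= e^-1 by rewrite invr_ge0 ltW.
have := archi_boundP ei.
set N := Num.Def.archi_bound _ => hN; exists N => k Nk.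
rewrite -[e]invrK ltf_pV2 ?posrE ?invr_gt0 ?ltr0n //.
by apply: lt_le_trans hN _; rewrite ler_nat leqW.
Qed.

Lemma bernoulli_ineq (R : realDomainType) (q : R) (n : nat) : 1 <= q ->
  1 + n%:R * (q - 1) <= q ^+ n.
Proof.
move=> q1; elim: n => [|n IHn]; first by rewrite mul0r addr0 expr0.
rewrite exprSr; apply: le_trans (ler_wpM2r (le_trans ler01 q1) IHn).
have := mulr_ge0 (ler0n R n) (sqr_ge0 (q - 1)).
rewrite -natr1; nra.
Qed.

Lemma le_of_pow2_le (R : archiRealFieldType) (a b c : R) : 0 < c ->
  (forall k : nat, a ^+ (2 ^ k) <= b * c ^+ (2 ^ k)) -> a <= c.
Proof.
move=> c0 h; rewrite leNgt; apply/negP => ca.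
pose q := a / c.
have q_gt1 : 0 < q - 1 by rewrite subr_gt0 ltr_pdivlMr // mul1r.
have q_ge1 : 1 <= q by rewrite ler_pdivlMr // mul1r ltW.
have qk_le k : q ^+ (2 ^ k) <= b.
  by rewrite expr_div_n ler_pdivrMr ?exprn_gt0.
have bnd : 0 <= `|b| / (q - 1) by rewrite divr_ge0 ?normr_ge0 ?(ltW q_gt1).
pose k := Num.Def.archi_bound (`|b| / (q - 1)).
have := archi_boundP bnd; rewrite -/k ltr_pdivrMr // => hk.
have := @bernoulli_ineq _ q (2 ^ k) q_ge1.
have k_le : k%:R <= (2 ^ k)%:R :> R by rewrite ler_nat ltnW // ltn_expl.
have := ler_wpM2r (ltW q_gt1) k_le.
have := qk_le k; have := ler_norm b; lra.
Qed.

Lemma zero_set_closed (R : realFieldType) (U V : zmodType)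
    (g : U -> V) (nU : U -> R) (N : V -> R) (C : R) :
  (forall x y, g (x - y) = g x - g y) -> (forall v, 0 <= N v) ->
  (forall v, N v = 0 -> v = 0) -> 0 <= C -> (forall x, N (g x) <= C * nU x) ->
  forall l, (forall e, 0 < e -> exists m, g m = 0 /\ nU (l - m) < e) -> g l = 0.
Proof.
move=> gB N_ge0 N_eq0 C_ge0 gC l l_lim; apply: N_eq0; apply/eqP.
rewrite eq_le N_ge0 andbT; apply/ler_addgt0Pr => e e_gt0; rewrite add0r.
have e'_gt0 : 0 < e / (C + 1) by rewrite divr_gt0 // ltr_wpDl.
have [m [gm0 lm_lt]] := l_lim _ e'_gt0.
have -> : g l = g (l - m) by rewrite gB gm0 subr0.
apply: le_trans (gC _) _; apply: le_trans (ler_wpM2l C_ge0 (ltW lm_lt)) _.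
by rewrite mulrA ler_pdivrMr ?ltr_wpDl // mulrDr mulr1 mulrC lerDl (ltW e_gt0).
Qed.

Section HermitianForm.
Variables (R : realType) (H : lmodType R[i]).

Definition hermitian_form (B : H -> H -> R[i]) : Prop :=
  [/\ forall (a : R[i]) (x y z : H), B (a *: x + y) z = a * B x z + B y z,
      forall x y : H, B y x = conjc (B x y) &
      forall x : H, 0 <= B x x].

Definition snorm (B : H -> H -> R[i]) (x : H) : R := Num.sqrt (complex.Re (B x x)).

Variable B : H -> H -> R[i].
Hypothesis hB : hermitian_form B.
Implicit Types (x y z w : H) (a b : R[i]).

Lemma formlin a x y z : B (a *: x + y) z = a * B x z + B y z.
Proof. by case: hB. Qed.

Lemma formC x y : B y x = conjc (B x y).
Proof. by case: hB. Qed.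

Lemma form_ge0 x : 0 <= B x x.
Proof. by case: hB. Qed.

Lemma form0l z : B 0 z = 0.
Proof.
have h := formlin 1 0 0 z; rewrite scaler0 addr0 mul1r in h.
by apply: (@addrI _ (B 0 z)); rewrite addr0 -h.
Qed.

Lemma formDl x y z : B (x + y) z = B x z + B y z.
Proof. by rewrite -[x]scale1r formlin mul1r scale1r. Qed.

Lemma formZl a x z : B (a *: x) z = a * B x z.
Proof. by rewrite -[a *: x]addr0 formlin form0l addr0. Qed.

Lemma formNl x z : B (- x) z = - B x z.
Proof. by rewrite -scaleN1r formZl mulN1r. Qed.

Lemma formBl x y z : B (x - y) z = B x z - B y z.
Proof. by rewrite formDl formNl. Qed.

Lemma form0r z : B z 0 = 0.
Proof. by rewrite formC form0l conjc0. Qed.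

Lemma formDr x y z : B z (x + y) = B z x + B z y.
Proof. by rewrite formC formDl conjcD -!formC. Qed.

Lemma formZr a x z : B z (a *: x) = conjc a * B z x.
Proof. by rewrite formC formZl conjcM -formC. Qed.

Lemma formNr x z : B z (- x) = - B z x.
Proof. by rewrite formC formNl conjcN -formC. Qed.

Lemma formBr x y z : B z (x - y) = B z x - B z y.
Proof. by rewrite formDr formNr. Qed.

Lemma form_diag x : B x x = (complex.Re (B x x))%:C.
Proof. exact/ge0_RRe/form_ge0. Qed.

Lemma Re_form_ge0 x : 0 <= complex.Re (B x x).
Proof. by rewrite -ler0c -form_diag form_ge0. Qed.

Lemma form_diag_conj x : conjc (B x x) = B x x.
Proof. exact/ge0_conjc/form_ge0. Qed.

Lemma form_comb a b x y : B (a *: x + b *: y) (a *: x + b *: y) =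
  a * conjc a * B x x + a * conjc b * B x y + b * conjc a * conjc (B x y)
  + b * conjc b * B y y.
Proof. by rewrite !formDl !formDr !formZl !formZr (formC x y); ring. Qed.

Lemma cauchy_schwarz_pos x y : 0 < B y y -> `|B x y| ^+ 2 <= B x x * B y y.
Proof.
move=> yy0; have := form_ge0 (B y y *: x + (- B x y) *: y).
rewrite form_comb form_diag_conj conjcN sqr_normc.
have -> : B y y * B y y * B x x + B y y * - conjc (B x y) * B x y +
    - B x y * B y y * conjc (B x y) + - B x y * - conjc (B x y) * B y y
    = B y y * (B x x * B y y - B x y * conjc (B x y)) by ring.
by rewrite pmulr_rge0 // subr_ge0.
Qed.

Lemma cauchy_schwarz x y : `|B x y| ^+ 2 <= B x x * B y y.
Proof.
have [yy0|yyN0] := eqVneq (B y y) 0; last first.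
  by apply: cauchy_schwarz_pos; rewrite lt_def yyN0 form_ge0.
have [xx0|xxN0] := eqVneq (B x x) 0; last first.
  rewrite (formC y x) normcJ mulrC; apply: cauchy_schwarz_pos.
  by rewrite lt_def xxN0 form_ge0.
rewrite yy0 xx0 mulr0; have := form_ge0 (1 *: x + (- B x y) *: y).
rewrite form_comb xx0 yy0 conjcN conjc1 sqr_normc.
have -> : 1 * 1 * 0 + 1 * - conjc (B x y) * B x y + - B x y * 1 * conjc (B x y)
    + - B x y * - conjc (B x y) * 0 = - (B x y * conjc (B x y)) *+ 2 by ring.
by rewrite pmulrn_lge0 // oppr_ge0.
Qed.

Lemma snorm_ge0 x : 0 <= snorm B x.
Proof. exact: sqrtr_ge0. Qed.

Lemma sqr_snorm x : snorm B x ^+ 2 = complex.Re (B x x).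
Proof. by rewrite sqr_sqrtr // Re_form_ge0. Qed.

Lemma normc_form_le x y : normc (B x y) <= snorm B x * snorm B y.
Proof.
rewrite -(ler_pXn2r (isT : (0 < 2)%N)) ?nnegrE ?mulr_ge0 ?normc_ge0 ?snorm_ge0 //.
rewrite exprMn !sqr_snorm; have := cauchy_schwarz x y.
by rewrite (form_diag x) (form_diag y) -rmorphM -[`|_|]/((normc _)%:C) -rmorphXn lecR.
Qed.

Lemma sqr_snormD x y :
  snorm B (x + y) ^+ 2 = snorm B x ^+ 2 + snorm B y ^+ 2 + complex.Re (B x y) *+ 2.
Proof.
rewrite !sqr_snorm formDl !formDr !ReD (formC x y) ReJ; ring.
Qed.

Lemma snormD x y : snorm B (x + y) <= snorm B x + snorm B y.
Proof.
rewrite -(ler_pXn2r (isT : (0 < 2)%N)) ?nnegrE ?addr_ge0 ?snorm_ge0 //.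
rewrite sqrrD sqr_snormD.
have := Re_le_normc (B x y); have := normc_form_le x y; lra.
Qed.

Lemma snorm_eq1 x : snorm B x = 1 -> B x x = 1.
Proof. by move=> x1; rewrite form_diag -sqr_snorm x1 expr1n. Qed.

Lemma snormZ a x : snorm B (a *: x) = normc a * snorm B x.
Proof.
rewrite /snorm formZl formZr mulrA -sqr_normc -[`|_|]/((normc _)%:C) -rmorphXn ReM_real.
by rewrite sqrtrM ?sqr_ge0 // sqrtr_sqr ger0_norm // normc_ge0.
Qed.

Lemma snormN x : snorm B (- x) = snorm B x.
Proof. by rewrite /snorm formNl formNr opprK. Qed.

Lemma snorm0_form x w : snorm B x = 0 -> B x w = 0.
Proof.
move=> x0; apply: ComplexField.Normc.eq0_normc; apply/eqP.
by rewrite eq_le normc_ge0 andbT; have := normc_form_le x w; rewrite x0 mul0r.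
Qed.

Lemma sqr_snormB x y :
  snorm B (x - y) ^+ 2 = snorm B x ^+ 2 + snorm B y ^+ 2 - complex.Re (B x y) *+ 2.
Proof. by rewrite sqr_snormD snormN formNr ReN mulNrn. Qed.

Lemma parallelogram x y :
  snorm B (x - y) ^+ 2 + snorm B (x + y) ^+ 2 = (snorm B x ^+ 2 + snorm B y ^+ 2) *+ 2.
Proof. by rewrite sqr_snormB sqr_snormD; ring. Qed.

Lemma buzano x y e : B e e = 1 ->
  normc (B x e * B e y) *+ 2 <= snorm B x * snorm B y + normc (B x y).
Proof.
move=> ee1; pose v := (B y e *+ 2) *: e - y.
have snorm_v : snorm B v = snorm B y.
  rewrite /snorm /v !formBl !formBr !formZl !formZr ee1 (formC y e) rmorphMn /=.
  by congr (Num.sqrt (complex.Re _)); ring.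
have av : B x v = (B x e * B e y) *+ 2 - B x y.
  by rewrite /v formBr formZr rmorphMn /= -formC; ring.
rewrite -normcMn -(subrK (B x y) (_ *+ 2)) -av.
apply: le_trans (le_normcD _ _) _; rewrite lerD2r -snorm_v.
exact: normc_form_le.
Qed.

Lemma minimizer_orthogonal v m :
  (forall c : R[i], snorm B v <= snorm B (v - c *: m)) -> B v m = 0.
Proof.
(* Compare [v] with [v - t <v, m> m] for the small real [t = 1 / (|m|^2 + 1)]. *)
move=> vmin; pose t := (snorm B m ^+ 2 + 1)^-1.
have t_gt0 : 0 < t by rewrite invr_gt0 ltr_pwDr ?exprn_ge0 ?snorm_ge0.
have tm_le1 : t * snorm B m ^+ 2 <= 1.
  by rewrite mulrC ler_pdivrMr ?mul1r ?lerDl // ltr_pwDr ?exprn_ge0 ?snorm_ge0.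
set p := normc (B v m).
have Re_conj : complex.Re (conjc (t%:C * B v m) * B v m) = t * p ^+ 2.
  rewrite conjcM conjc_real -mulrA [conjc _ * _]mulrC -sqr_normc ReM_real.
  by rewrite -[`|_|]/(p%:C) -rmorphXn.
have := vmin (t%:C * B v m).
rewrite -(ler_pXn2r (isT : (0 < 2)%N)) ?nnegrE ?snorm_ge0 // sqr_snormB snormZ formZr.
rewrite Re_conj ComplexField.Normc.normcM (normc_real (ltW t_gt0)) -/p => h.
have tp2_le0 : t * p ^+ 2 <= 0.
  have : t * p ^+ 2 * (t * snorm B m ^+ 2) <= t * p ^+ 2.
    by apply: ler_piMr => //; rewrite mulr_ge0 ?exprn_ge0 ?normc_ge0 ?(ltW t_gt0).
  have e : (t * p * snorm B m) ^+ 2 = t * p ^+ 2 * (t * snorm B m ^+ 2) by ring.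
  by rewrite e in h; lra.
have p0 : p = 0.
  by apply/eqP; rewrite -sqrf_eq0 eq_le sqr_ge0 andbT -(pmulr_rle0 _ t_gt0).
exact: ComplexField.Normc.eq0_normc.
Qed.

End HermitianForm.

Section SelfadjointBound.
Variables (R : realType) (H : lmodType R[i]) (B : H -> H -> R[i]).
Hypothesis hB : hermitian_form B.
Variables (T : H -> H) (M : R).
Hypothesis T_selfadjoint : forall y z, B (T y) z = B y (T z).
Hypothesis M_gt0 : 0 < M.
Hypothesis iter_growth : forall y, exists b, forall k, snorm B (iter k T y) <= b * M ^+ k.

Lemma form_iter k y z : B (iter k T y) z = B y (iter k T z).
Proof. by elim: k y z => [//|k IHk] y z; rewrite iterS T_selfadjoint IHk -iterSr. Qed.

Lemma sqr_snorm_iter m y :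
  snorm B (iter m T y) ^+ 2 <= snorm B (iter (m + m) T y) * snorm B y.
Proof.
rewrite sqr_snorm // form_iter -iterD mulrC.
exact: le_trans (Re_le_normc _) (normc_form_le hB _ _).
Qed.

Lemma snorm_iter_pow2 y k : 0 < snorm B y ->
  (snorm B (T y) / snorm B y) ^+ (2 ^ k) <= snorm B (iter (2 ^ k) T y) / snorm B y.
Proof.
move=> y_gt0; elim: k => [|k IHk]; first by rewrite expr1.
rewrite expnSr exprM.
apply: (le_trans (y := (snorm B (iter (2 ^ k) T y) / snorm B y) ^+ 2)).
  by rewrite lerXn2r // nnegrE ?exprn_ge0 ?divr_ge0 ?snorm_ge0 ?(ltW y_gt0).
rewrite expr_div_n ler_pdivrMr ?exprn_gt0 // [snorm B y ^+ 2]expr2 mulrA divfK ?gt_eqF //.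
by rewrite muln2 -addnn sqr_snorm_iter.
Qed.

Lemma snorm_selfadjoint_le y : snorm B (T y) <= M * snorm B y.
Proof.
have [y0|yN0] := eqVneq (snorm B y) 0.
  have := sqr_snorm_iter 1 y; rewrite y0 mulr0 /= => Ty0.
  by rewrite mulr0 -(ler_pXn2r (isT : (0 < 2)%N)) ?nnegrE ?snorm_ge0 // expr0n.
have y_gt0 : 0 < snorm B y by rewrite lt_def yN0 snorm_ge0.
have [b hb] := iter_growth y.
rewrite -ler_pdivrMr //; apply: (@le_of_pow2_le _ _ (b / snorm B y)) => // k.
apply: le_trans (snorm_iter_pow2 k y_gt0) _.
by rewrite mulrAC ler_pM2r ?invr_gt0.
Qed.

End SelfadjointBound.

Section AdjointPair.
Variables (R : realType) (H : lmodType R[i]) (B : H -> H -> R[i]).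
Hypothesis hB : hermitian_form B.
Variables T Ts : H -> H.
Hypothesis Ts_adjoint : forall y w, B (Ts y) w = B y (T w).

Lemma form_adjoint_r y w : B (T w) y = B w (Ts y).
Proof. by rewrite (formC hB (Ts y)) Ts_adjoint -formC. Qed.

Lemma form_Ts_T x : B x (Ts (T x)) = (snorm B (T x) ^+ 2)%:C.
Proof. by rewrite sqr_snorm // -form_diag // form_adjoint_r. Qed.

Lemma form_T_Ts x : B (T (Ts x)) x = (snorm B (Ts x) ^+ 2)%:C.
Proof. by rewrite sqr_snorm // -form_diag // form_adjoint_r. Qed.

Lemma normc_form_exp4_le x : B x x = 1 ->
  normc (B (T x) x) ^+ 4 <=
    4^-1 * snorm B (Ts (T (Ts (T x))) + T (Ts (T (Ts x))))
    + 2^-1 * normc (B (Ts (T (T (Ts x)))) x).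
Proof.
move=> xx1; have x1 : snorm B x = 1 by rewrite /snorm xx1 sqrtr1.
set r := normc (B (T x) x); set a := T (Ts x); set b := Ts (T x).
have r_le_T : r <= snorm B (T x) by rewrite -[snorm B (T x)]mulr1 -x1 normc_form_le.
have r_le_Ts : r <= snorm B (Ts x).
  by rewrite -[snorm B (Ts x)]mul1r -x1 /r form_adjoint_r normc_form_le.
have r4_le : r ^+ 4 <= snorm B (T x) ^+ 2 * snorm B (Ts x) ^+ 2.
  rewrite (_ : 4 = 2 + 2)%N // exprD.
  by apply: ler_pM; rewrite ?exprn_ge0 ?normc_ge0 // !expr2;
    apply: ler_pM; rewrite ?normc_ge0.
have buz := buzano hB a b xx1.
rewrite form_T_Ts form_Ts_T -rmorphM normc_real ?mulr_ge0 ?exprn_ge0 ?snorm_ge0 //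
  mulr2n in buz.
have sum_le : snorm B a ^+ 2 + snorm B b ^+ 2 <= snorm B (Ts (T b) + T (Ts a)).
  rewrite !sqr_snorm // -ReD.
  have -> : B a a + B b b = B x (Ts (T b) + T (Ts a)).
    rewrite formDr // [B a a]form_adjoint_r [B (Ts x) _]Ts_adjoint.
    by rewrite [B b b]Ts_adjoint [B (T x) _]form_adjoint_r addrC.
  apply: le_trans (Re_le_normc _) _; apply: le_trans (normc_form_le hB _ _) _.
  by rewrite x1 mul1r.
have -> : B (Ts (T (T (Ts x)))) x = B a b by rewrite Ts_adjoint form_adjoint_r.
have amgm : 2 * (snorm B a * snorm B b) <= snorm B a ^+ 2 + snorm B b ^+ 2.
  by have := sqr_ge0 (snorm B a - snorm B b); rewrite sqrrB mulr2n; lra.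
rewrite [_ ^+ 2 * _ ^+ 2]mulrC in buz; lra.
Qed.

End AdjointPair.

Section BoundedOperator.
Variables (R : realType) (H : lmodType R[i]) (ip : H -> H -> R[i]).
Variable T : H -> H.
Hypothesis hT : bounded_op ip T.

Lemma bounded_op0 : T 0 = 0.
Proof.
have h := hT.1 1 0 0; rewrite scaler0 addr0 scale1r in h.
by apply: (@addrI _ (T 0)); rewrite addr0 -h.
Qed.

Lemma bounded_opD x y : T (x + y) = T x + T y.
Proof. by rewrite -[x]scale1r hT.1 !scale1r. Qed.

Lemma bounded_opZ a x : T (a *: x) = a *: T x.
Proof. by rewrite -[a *: x]addr0 hT.1 bounded_op0 addr0. Qed.

Lemma bounded_opB x y : T (x - y) = T x - T y.
Proof. by rewrite bounded_opD -scaleN1r bounded_opZ scaleN1r. Qed.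

Lemma bounded_op_gt0 : exists2 M : R, 0 < M & forall x, snorm ip (T x) <= M * snorm ip x.
Proof.
case: hT => _ [M hM]; exists (`|M| + 1) => [|x]; first by rewrite ltr_pwDr.
apply: le_trans (hM x) _; rewrite ler_wpM2r ?snorm_ge0 //.
by apply: le_trans (ler_norm M) _; rewrite lerDl.
Qed.

End BoundedOperator.

Section HilbertSpace.
Variables (R : realType) (H : lmodType R[i]) (ip : H -> H -> R[i]).
Hypothesis hH : is_hilbert_space ip.

Lemma ip_hermitian : hermitian_form ip.
Proof. by case: hH. Qed.

Lemma ip_eq0 x : ip x x = 0 -> x = 0.
Proof. by case: hH => _ _ _ ip_def _; exact: ip_def. Qed.

Lemma snorm_ip_eq0 x : snorm ip x = 0 -> x = 0.
Proof. by move=> x0; apply: ip_eq0; exact: snorm0_form ip_hermitian _ _ x0. Qed.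

Lemma ip_cauchy_cvg (u : nat -> H) :
  (forall e, 0 < e -> exists N, forall m n, (N <= m)%N -> (N <= n)%N ->
     snorm ip (u m - u n) < e) ->
  exists l, forall e, 0 < e -> exists N, forall n, (N <= n)%N -> snorm ip (u n - l) < e.
Proof. by case: hH => _ _ _ _; apply. Qed.

Section Projection.
Variable M : set H.
Hypothesis M0 : M 0.
Hypothesis MD : forall x y, M x -> M y -> M (x + y).
Hypothesis MZ : forall a x, M x -> M (a *: x).
Hypothesis M_closed :
  forall l, (forall e, 0 < e -> exists m, M m /\ snorm ip (l - m) < e) -> M l.
Variable u : H.

Let dist2 := inf [set snorm ip (u - m) ^+ 2 | m in M].

Let dist2_lbound : has_lbound [set snorm ip (u - m) ^+ 2 | m in M].
Proof. by exists 0 => _ [m _ <-]; exact: sqr_ge0. Qed.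

Let dist2_nonempty : [set snorm ip (u - m) ^+ 2 | m in M] !=set0.
Proof. by exists (snorm ip (u - 0) ^+ 2), 0. Qed.

Lemma dist2_le m : M m -> dist2 <= snorm ip (u - m) ^+ 2.
Proof. by move=> Mm; apply: ge_inf dist2_lbound _ _; exists m. Qed.

Lemma dist2_ge0 : 0 <= dist2.
Proof. by apply: lb_le_inf dist2_nonempty _ => _ [m _ <-]; exact: sqr_ge0. Qed.

Lemma dist2_approx e : 0 < e -> exists m, M m /\ snorm ip (u - m) ^+ 2 < dist2 + e.
Proof.
move=> e_gt0; have [_ [m Mm <-]] := inf_adherent e_gt0 (conj dist2_nonempty dist2_lbound).
by exists m.
Qed.

Lemma near_minimizers_close m m' a b : M m -> M m' ->
  snorm ip (u - m) ^+ 2 <= dist2 + a -> snorm ip (u - m') ^+ 2 <= dist2 + b ->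
  snorm ip (m - m') ^+ 2 <= 2 * a + 2 * b.
Proof.
move=> Mm Mm' um um'; pose w := (2^-1 : R[i]) *: (m + m').
have uw : dist2 <= snorm ip (u - w) ^+ 2 by apply/dist2_le/MZ/MD.
have := parallelogram ip_hermitian (u - m') (u - m).
have -> : u - m' + (u - m) = 2%:R *: (u - w).
  rewrite scalerBr /w scalerA mulfV ?pnatr_eq0 // scale1r scaler_nat mulr2n.
  by rewrite opprD addrACA (addrC (- m')).
rewrite (snormZ ip_hermitian) -[2 : R[i]](rmorph_nat (real_complex R)) normc_real ?ler0n //.
have -> : u - m' - (u - m) = m - m' by rewrite opprB addrC addrA subrK.
rewrite exprMn -[(2 : R) ^+ 2]/(2 * 2) -[(_ + _) *+ 2]mulr_natr; lra.
Qed.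

Lemma minimizing_limit_le (ms : nat -> H) (n : H) :
  (forall k, snorm ip (u - ms k) ^+ 2 < dist2 + k.+1%:R^-1) ->
  (forall e, 0 < e -> exists N, forall k, (N <= k)%N -> snorm ip (ms k - n) < e) ->
  snorm ip (u - n) <= Num.sqrt dist2.
Proof.
move=> ms_min ms_lim; apply/ler_addgt0Pr => e e_gt0.
have e2_gt0 : 0 < e / 2 by rewrite divr_gt0.
have [N1 hN1] := ms_lim _ e2_gt0.
have [N2 hN2] := lt_inv_succ (exprn_gt0 2 e2_gt0).
pose k := maxn N1 N2; have msk_n := hN1 k (leq_maxl _ _).
have inv_k_ge0 : 0 <= k.+1%:R^-1 :> R by rewrite invr_ge0.
have sqrt_inv_k : Num.sqrt k.+1%:R^-1 <= e / 2.
  rewrite -[e / 2]ger0_norm ?(ltW e2_gt0) // -sqrtr_sqr ler_sqrt ?sqr_ge0 //.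
  exact/ltW/hN2/leq_maxr.
have u_msk : snorm ip (u - ms k) <= Num.sqrt dist2 + e / 2.
  rewrite -[snorm ip _]ger0_norm ?snorm_ge0 // -sqrtr_sqr.
  apply: (le_trans (y := Num.sqrt (dist2 + k.+1%:R^-1))).
    by rewrite ler_sqrt ?addr_ge0 ?dist2_ge0 //; exact/ltW/ms_min.
  by apply: le_trans (sqrtrD_le dist2_ge0 inv_k_ge0) _; rewrite lerD2l.
have -> : u - n = (u - ms k) + (ms k - n) by rewrite addrA subrK.
apply: le_trans (snormD ip_hermitian _ _) _; lra.
Qed.

Lemma exists_nearest :
  exists2 n, M n & forall m, M m -> snorm ip (u - n) <= snorm ip (u - m).
Proof.
have inv_gt0 k : 0 < k.+1%:R^-1 :> R by rewrite invr_gt0.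
have [ms ms_min] := @choice _ _ _ (fun k => dist2_approx (inv_gt0 k)).
have ms_cauchy e : 0 < e -> exists N, forall j k, (N <= j)%N -> (N <= k)%N ->
    snorm ip (ms j - ms k) < e.
  move=> e_gt0; have [N hN] := lt_inv_succ (divr_gt0 (exprn_gt0 2 e_gt0) (ltr0n R 4)).
  exists N => j k Nj Nk; have [Mj uj] := ms_min j; have [Mk uk] := ms_min k.
  have := near_minimizers_close Mj Mk (ltW uj) (ltW uk).
  rewrite -(ltr_pXn2r (isT : (0 < 2)%N)) ?nnegrE ?snorm_ge0 ?(ltW e_gt0) //.
  have := hN j Nj; have := hN k Nk.
  set a := j.+1%:R^-1; set b := k.+1%:R^-1; lra.
have [n ms_lim] := ip_cauchy_cvg ms_cauchy.
have Mn : M n.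
  apply: M_closed => e e_gt0; have [N hN] := ms_lim e e_gt0.
  exists (ms N); split; first by case: (ms_min N).
  by rewrite -opprB (snormN ip_hermitian); apply: hN.
exists n => // m Mm.
apply: le_trans (minimizing_limit_le (fun k => (ms_min k).2) ms_lim) _.
rewrite -[snorm ip (u - m)]ger0_norm ?snorm_ge0 // -sqrtr_sqr.
by rewrite ler_sqrt ?sqr_ge0 // dist2_le.
Qed.

Lemma projection : exists2 n, M n & forall m, M m -> ip (u - n) m = 0.
Proof.
have [n Mn n_near] := exists_nearest; exists n => // m Mm.
apply: (minimizer_orthogonal ip_hermitian) => c.
by rewrite -addrA -opprD; apply/n_near/MD/MZ.
Qed.

End Projection.

Lemma riesz (f : H -> R[i]) (C : R) :
  (forall a x y, f (a *: x + y) = a * f x + f y) -> 0 <= C ->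
  (forall x, normc (f x) <= C * snorm ip x) ->
  exists r, forall x, f x = ip x r.
Proof.
move=> f_lin C_ge0 f_bnd.
have f0 : f 0 = 0.
  have h := f_lin 1 0 0; rewrite scaler0 addr0 mul1r in h.
  by apply: (@addrI _ (f 0)); rewrite addr0 -h.
have fZ a x : f (a *: x) = a * f x by rewrite -[a *: x]addr0 f_lin f0 addr0.
have fD x y : f (x + y) = f x + f y by rewrite -[x]scale1r f_lin mul1r scale1r.
have fB x y : f (x - y) = f x - f y by rewrite fD -scaleN1r fZ mulN1r.
have [f_eq0|/existsNP[u fu]] := pselect (forall x, f x = 0).
  by exists 0 => x; rewrite f_eq0 (form0r ip_hermitian).
have ker_closed := zero_set_closed fB (@normc_ge0 R) (@ComplexField.Normc.eq0_normc R)
  C_ge0 f_bnd.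
have kerD x y : f x = 0 -> f y = 0 -> f (x + y) = 0.
  by move=> fx fy; rewrite fD fx fy addr0.
have kerZ a x : f x = 0 -> f (a *: x) = 0 by move=> fx; rewrite fZ fx mulr0.
(* The representer is a multiple of a vector orthogonal to [ker f] outside [ker f]. *)
have [n fn0 n_orth] := projection (M := [set x | f x = 0]) f0 kerD kerZ ker_closed u.
set v := u - n in n_orth.
have fv : f v = f u by rewrite fB fn0 subr0.
have vv_neq0 : ip v v != 0 by apply: contra_notN fu => /eqP/ip_eq0 v0; rewrite -fv v0.
exists ((conjc (f v) / ip v v) *: v) => x.
have f_orth : f x * ip v v = f v * ip x v.
  apply/eqP; rewrite -subr_eq0 -(formZl ip_hermitian) -(formZl ip_hermitian).
  rewrite -(formBl ip_hermitian) (formC ip_hermitian v) n_orth ?conjc0 //=.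
  by rewrite fB !fZ mulrC subrr.
rewrite (formZr ip_hermitian) conjcM conjcK conjc_inv (form_diag_conj ip_hermitian).
by apply: (mulIf vv_neq0); rewrite f_orth; field.
Qed.

Lemma bounded_op_ker_closed T (hT : bounded_op ip T) l :
  (forall e, 0 < e -> exists m, T m = 0 /\ snorm ip (l - m) < e) -> T l = 0.
Proof.
have [M M_gt0 hM] := bounded_op_gt0 hT.
exact: zero_set_closed (bounded_opB hT) (snorm_ge0 ip) snorm_ip_eq0 (ltW M_gt0) hM l.
Qed.

Lemma adjoint_spec T (hT : bounded_op ip T) x y : ip (T x) y = ip x (adjoint ip T y).
Proof.
have [M M_gt0 hM] := bounded_op_gt0 hT.
suff adj_ex : exists F : H -> H, forall x y, ip (T x) y = ip x (F y).
  by move: x y; rewrite /adjoint; move: adj_ex; exact: epsilon_spec.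
have riesz_z z : exists r, forall x, ip (T x) z = ip x r.
  apply: (@riesz (fun x => ip (T x) z) (M * snorm ip z)) => [a u w||u].
  - by rewrite hT.1 (formlin ip_hermitian).
  - by rewrite mulr_ge0 ?snorm_ge0 ?(ltW M_gt0).
  - apply: le_trans (normc_form_le ip_hermitian _ _) _.
    by rewrite mulrAC ler_wpM2r ?snorm_ge0.
by have [F hF] := @choice _ _ _ riesz_z; exists F.
Qed.

End HilbertSpace.

Section PositiveOperator.
Variables (R : realType) (H : lmodType R[i]) (ip : H -> H -> R[i]).
Hypothesis hH : is_hilbert_space ip.
Variable A : H -> H.
Hypothesis hA : positive_op ip A.

Local Notation hip := (ip_hermitian hH).
Local Notation B := (ipA ip A).

Lemma positive_op_bounded : bounded_op ip A.
Proof. by case: hA. Qed.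

Local Notation hAb := positive_op_bounded.

Lemma ipA_sym x y : B y x = conjc (B x y).
Proof.
(* Polarization: the diagonal values at [x + y] and [x + 'i *: y] are real. *)
have diag_conj w : conjc (ip (A w) w) = ip (A w) w by apply/ge0_conjc; case: hA.
have := diag_conj (x + 'i *: y); have := diag_conj (x + y).
rewrite /ipA !(bounded_opD hAb) !(bounded_opZ hAb) !(formDl hip) !(formDr hip).
rewrite !(formZl hip) !(formZr hip) !conjcD !conjcM conjcK conjci !diag_conj.
move=> /eqP; rewrite -subr_eq0 => /eqP E1 /eqP; rewrite -subr_eq0 => /eqP E2.
set p := ip (A x) y in E1 E2 *; set q := ip (A y) x in E1 E2 *.
have k1 : conjc p + conjc q - p - q = 0 by rewrite -E1; ring.
have k2 : 'i * (conjc p - conjc q + p - q) = 0 by rewrite -E2; ring.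
have i_neq0 : 'i != 0 :> R[i] by rewrite eq_complex /= oner_eq0 andbF.
move/eqP: k2; rewrite mulf_eq0 (negbTE i_neq0) /= => /eqP k2.
have : (conjc p - q) * 2 = (conjc p + conjc q - p - q) + (conjc p - conjc q + p - q).
  by ring.
by rewrite k1 k2 addr0 => /eqP; rewrite mulf_eq0 pnatr_eq0 orbF subr_eq0 => /eqP.
Qed.

Lemma ipA_hermitian : hermitian_form B.
Proof.
split=> [a x y z||x]; first by rewrite /ipA hAb.1 (formlin hip).
  exact: ipA_sym.
by case: hA => _; apply.
Qed.

Local Notation hB := ipA_hermitian.

Lemma A_selfadjoint v w : ip (A v) w = ip v (A w).
Proof. by have := ipA_sym w v; rewrite /ipA => ->; rewrite -(formC hip). Qed.

(* [A A^dagger A = A]: the component of [w] orthogonal to [ker A] satisfies the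
   conditions defining [A^dagger (A w)]. *)
Lemma mp_inverse_rangeK w : A (mp_inverse ip A (A w)) = A w.
Proof.
have kerD x z : A x = 0 -> A z = 0 -> A (x + z) = 0.
  by move=> Ax Az; rewrite (bounded_opD hAb) Ax Az addr0.
have kerZ a x : A x = 0 -> A (a *: x) = 0.
  by move=> Ax; rewrite (bounded_opZ hAb) Ax scaler0.
have [n An0 n_orth] := projection hH (M := [set x | A x = 0]) (bounded_op0 hAb) kerD kerZ
  (bounded_op_ker_closed hH hAb) w.
have mp_ex : exists z, (forall v, A v = 0 -> ip z v = 0) /\
    (forall v, ip (A z - A w) (A v) = 0).
  exists (w - n); split; first exact: n_orth.
  by move=> v; rewrite (bounded_opB hAb) An0 subr0 subrr (form0l hip).
have [_ /(_ (mp_inverse ip A (A w) - w))] := epsilon_spec (inhabits (0 : H)) _ mp_ex.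
rewrite -(bounded_opB hAb) => /(ip_eq0 hH)/eqP.
by rewrite (bounded_opB hAb) subr_eq0 => /eqP.
Qed.

Lemma snormA_le : exists2 c, 0 < c & forall y, snorm B y <= c * snorm ip y.
Proof.
have [M M_gt0 hM] := bounded_op_gt0 hAb.
exists (Num.sqrt M) => [|y]; first by rewrite sqrtr_gt0.
rewrite -(ler_pXn2r (isT : (0 < 2)%N)) ?nnegrE ?mulr_ge0 ?sqrtr_ge0 ?snorm_ge0 //.
rewrite (sqr_snorm hB) exprMn sqr_sqrtr ?(ltW M_gt0) //.
apply: le_trans (Re_le_normc _) _; apply: le_trans (normc_form_le hip _ _) _.
by rewrite expr2 mulrA ler_wpM2r ?snorm_ge0.
Qed.

Definition A_bounded (F : H -> H) :=
  exists2 c : R, 0 <= c & forall y, snorm B (F y) <= c * snorm B y.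

Lemma A_bounded_comp F G : A_bounded F -> A_bounded G -> A_bounded (fun x => F (G x)).
Proof.
move=> [c1 c1_ge0 hF] [c2 c2_ge0 hG]; exists (c1 * c2) => [|y]; first exact: mulr_ge0.
by apply: le_trans (hF _) _; rewrite -mulrA ler_wpM2l.
Qed.

Lemma A_bounded_add F G : A_bounded F -> A_bounded G -> A_bounded (fun x => F x + G x).
Proof.
move=> [c1 c1_ge0 hF] [c2 c2_ge0 hG]; exists (c1 + c2) => [|y]; first exact: addr_ge0.
by apply: le_trans (snormD hB _ _) _; rewrite mulrDl lerD.
Qed.

Lemma A_bounded_of_adjoint F G : A_bounded G ->
  (forall y w, B (F y) w = B y (G w)) -> A_bounded F.
Proof.
move=> [c c_ge0 hG] FG; exists c => // y.
have [Fy0|Fy_neq0] := eqVneq (snorm B (F y)) 0.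
  by rewrite Fy0 mulr_ge0 ?snorm_ge0.
have Fy_gt0 : 0 < snorm B (F y) by rewrite lt_def Fy_neq0 snorm_ge0.
rewrite -(ler_pM2r Fy_gt0) -expr2 (sqr_snorm hB) FG mulrAC mulrC.
apply: le_trans (Re_le_normc _) _; apply: le_trans (normc_form_le hB _ _) _.
by rewrite ler_wpM2l ?snorm_ge0.
Qed.

Lemma exists_normA1 : (exists x, A x <> 0) -> exists x, normA ip A x = 1.
Proof.
move=> [x Ax_neq0]; have x_neq0 : snorm B x != 0.
  by apply/eqP => /(snorm0_form hB (A x)) /(ip_eq0 hH).
have x_gt0 : 0 < snorm B x by rewrite lt_def x_neq0 snorm_ge0.
exists ((snorm B x)^-1%:C *: x).
by rewrite /normA -/(snorm B _) (snormZ hB) normc_real ?invr_ge0 ?snorm_ge0 // mulVf.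
Qed.

Lemma opnormA_ge F x : A_bounded F -> normA ip A x = 1 ->
  normA ip A (F x) <= opnormA ip A F.
Proof.
move=> [c c_ge0 hF] x1; apply: sup_upper_bound; last by exists x.
split; first by exists (normA ip A (F x)), x.
exists c => _ [y [y1 ->]]; change (snorm B y = 1) in y1.
by have := hF y; rewrite y1 mulr1.
Qed.

Lemma numradA_ge F x : A_bounded F -> normA ip A x = 1 ->
  normc (B (F x) x) <= numradA ip A F.
Proof.
move=> [c c_ge0 hF] x1; apply: sup_upper_bound; last by exists x.
split; first by exists (normc (B (F x) x)), x.
exists c => _ [y [y1 ->]]; change (snorm B y = 1) in y1.
apply: le_trans (normc_form_le hB _ _) _.
by have := hF y; rewrite y1 !mulr1.
Qed.

Lemma numradA_le F c : (exists x, normA ip A x = 1) ->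
  (forall x, normA ip A x = 1 -> normc (B (F x) x) <= c) -> numradA ip A F <= c.
Proof.
move=> [x0 x01] hc; apply: ge_sup; first by exists (normc (B (F x0) x0)), x0.
by move=> _ [y [y1 ->]]; apply: hc.
Qed.

Lemma numradA_exp4_le F K : A_bounded F -> (exists x, normA ip A x = 1) ->
  (forall x, normA ip A x = 1 -> normc (B (F x) x) ^+ 4 <= K) -> numradA ip A F ^+ 4 <= K.
Proof.
move=> hF [x0 x01] hK.
have K_ge0 : 0 <= K := le_trans (exprn_ge0 _ (normc_ge0 _)) (hK x0 x01).
have root4K : Num.sqrt (Num.sqrt K) ^+ 4 = K.
  by rewrite (_ : 4 = 2 * 2)%N // exprM !sqr_sqrtr ?sqrtr_ge0.
have pow4_le a : 0 <= a -> (a <= Num.sqrt (Num.sqrt K)) = (a ^+ 4 <= K).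
  by move=> a_ge0; rewrite -{2}root4K ler_pXn2r ?nnegrE ?sqrtr_ge0.
rewrite -pow4_le; last exact: le_trans (normc_ge0 _) (numradA_ge hF x01).
apply: numradA_le => [|x x1]; first by exists x0.
by rewrite pow4_le ?normc_ge0 ?hK.
Qed.

Section AAdjoint.
Variables S S' : H -> H.
Hypotheses (hS : bounded_op ip S) (hS' : bounded_op ip S').
Hypothesis S'_Aadjoint : forall x y, B (S x) y = B x (S' y).

Lemma A_bounded_of_Aadjoint : A_bounded S.
Proof.
have [M1 M1_gt0 hM1] := bounded_op_gt0 hS.
have [M2 M2_gt0 hM2] := bounded_op_gt0 hS'.
have [cA cA_gt0 hcA] := snormA_le.
pose P y := S' (S y).
have P_selfadjoint y z : B (P y) z = B y (P z).
  by rewrite (ipA_sym z) -S'_Aadjoint -ipA_sym S'_Aadjoint.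
have P_iter k y : snorm ip (iter k P y) <= (M2 * M1) ^+ k * snorm ip y.
  elim: k => [|k IHk]; first by rewrite expr0 mul1r.
  rewrite iterS exprS -!mulrA; apply: le_trans (hM2 _) _; rewrite ler_pM2l //.
  by apply: le_trans (hM1 _) _; rewrite ler_pM2l.
have P_growth y : exists b, forall k, snorm B (iter k P y) <= b * (M2 * M1) ^+ k.
  exists (cA * snorm ip y) => k; apply: le_trans (hcA _) _.
  by rewrite -mulrA ler_wpM2l ?(ltW cA_gt0) // mulrC.
have hP := snorm_selfadjoint_le hB P_selfadjoint (mulr_gt0 M2_gt0 M1_gt0) P_growth.
exists (Num.sqrt (M2 * M1)) => [|y]; first exact: sqrtr_ge0.
rewrite -(ler_pXn2r (isT : (0 < 2)%N)) ?nnegrE ?mulr_ge0 ?sqrtr_ge0 ?snorm_ge0 //.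
rewrite (sqr_snorm hB) exprMn sqr_sqrtr ?mulr_ge0 ?(ltW M1_gt0) ?(ltW M2_gt0) //.
rewrite S'_Aadjoint; apply: le_trans (Re_le_normc _) _.
apply: le_trans (normc_form_le hB _ _) _.
by rewrite expr2 mulrCA; apply: ler_wpM2l; [exact: snorm_ge0 | exact: hP].
Qed.

Local Notation Ss := (sharpA ip A S).

Lemma adjoint_A y : adjoint ip S (A y) = A (S' y).
Proof.
apply/eqP; rewrite -subr_eq0; apply/eqP/(ip_eq0 hH).
rewrite (formBr hip) -(adjoint_spec hH hS) -!A_selfadjoint.
by apply/eqP; rewrite subr_eq0; apply/eqP; exact: S'_Aadjoint.
Qed.

Lemma A_sharpA y : A (Ss y) = A (S' y).
Proof. by rewrite /sharpA adjoint_A mp_inverse_rangeK. Qed.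

Lemma sharpA_Aadjoint y w : B (Ss y) w = B y (S w).
Proof. by rewrite (ipA_sym (S w)) S'_Aadjoint -ipA_sym /ipA A_sharpA. Qed.

Lemma A_bounded_sharpA : A_bounded Ss.
Proof. exact: A_bounded_of_adjoint A_bounded_of_Aadjoint sharpA_Aadjoint. Qed.

End AAdjoint.

End PositiveOperator.

Theorem corollary3p11 (R : realType) (H : lmodType R[i]) (ip : H -> H -> R[i])
  (hH : is_hilbert_space ip) (A : H -> H)
  (hA : positive_op ip A) (hA0 : exists x : H, A x <> 0)
  (S : H -> H) (hS : in_BA ip A S) :
  let Ss := sharpA ip A S in
  numradA ip A S ^+ 4 <=
    4^-1 * opnormA ip A (fun x => Ss (S (Ss (S x))) + S (Ss (S (Ss x))))
    + 2^-1 * numradA ip A (fun x => Ss (S (S (Ss x)))).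
Proof.
case: hS => hSb [S' [hS'b S'_Aadjoint]].
have hB := ipA_hermitian hH hA.
have bS := A_bounded_of_Aadjoint hH hA hSb hS'b S'_Aadjoint.
have bSs := A_bounded_sharpA hH hA hSb hS'b S'_Aadjoint.
apply: (numradA_exp4_le hH hA bS (exists_normA1 hH hA hA0)) => x x1.
have Ss_adj := sharpA_Aadjoint hH hA hSb S'_Aadjoint.
apply: le_trans (normc_form_exp4_le hB Ss_adj (snorm_eq1 hB x1)) _.
apply: lerD; apply: ler_wpM2l; rewrite ?invr_ge0 ?ler0n //.
  apply: opnormA_ge x1; apply: (A_bounded_add hH hA).
    exact: A_bounded_comp bSs (A_bounded_comp bS (A_bounded_comp bSs bS)).
  exact: A_bounded_comp bS (A_bounded_comp bSs (A_bounded_comp bS bSs)).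
apply: (numradA_ge hH hA _ x1).
exact: A_bounded_comp bSs (A_bounded_comp bS (A_bounded_comp bS bSs)).
Qed.
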